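(* Let $\mathbf p$ be a pinned configuration in $\mathbb R^d$ with $\ell$-dimensional affine span, and let $k\ge1$. If an analytic trajectory $\mathbf p(t)$ with $\mathbf p(0)=\mathbf p$ is in $\ell$-pinned position for all $t$ and is $k$-trivial, then it is $k$-vanishing.
   Context: A configuration $\mathbf q=(\mathbf q_1,\dots,\mathbf q_n)$, $\mathbf q_i\in\mathbb R^d$, is in $\ell$-pinned position if $\mathbf q_1=0$ and, for $2\le i\le\ell+1$, $\mathbf q_i\in\mathrm{span}(e_1,\dots,e_{i-1})$. A configuration $\mathbf p$ with $\ell$-dimensional affine span is pinned if $\mathbf p_1,\dots,\mathbf p_{\ell+1}$ are affinely independent and $\mathbf p$ is in $\ell$-pinned position. An analytic trajectory of isometries is a family $T(t)\mathbf x=A(t)\mathbf x+\mathbf b(t)$ with $A(t)$ orthogonal and $A,\mathbf b$ analytic in $t$. An analytic trajectory $\mathbf p(t)$ is $k$-trivial if it agrees through $k$-th order in $t$ (equal Taylor coefficients of orders $0,\dots,k$ at $t=0$) with $T(t)\mathbf p(0)$ for some analytic trajectory of isometries $T(t)$ with $T(0)=I$. A $C^k$ vector function $\varphi(t)$ is $k$-vanishing if $\varphi^{(i)}(0)=0$ for $1\le i\le k$. *)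

From Stdlib Require Import Reals.
From Coquelicot Require Import Coquelicot.
Open Scope R_scope.

(* Conventions.
   - A point of R^d is a function  nat -> R  of which only the coordinates
     j < d are meaningful (coordinate j corresponds to e_{j+1}).
   - A configuration of n points is  q : nat -> nat -> R  with  q v j  the
     j-th coordinate of point number v, for v < n.  Point v (0-based)
     is the paper's q_{v+1}.
   - A trajectory is  p : nat -> nat -> R -> R,  p v j t  being the j-th
     coordinate of point v at time t. *)

Fixpoint fsum (f : nat -> R) (m : nat) : R :=
  match m with
  | O => 0
  | S m' => fsum f m' + f m'
  end.

Definition kdelta (i j : nat) : R := if Nat.eqb i j then 1 else 0.

Definition analytic_on (eps : R) (f : R -> R) : Prop :=
  forall t0, Rabs t0 < eps ->
    exists r, 0 < r /\ exists a : nat -> R,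
      forall t, Rabs (t - t0) < r -> is_pseries a (t - t0) (f t).

Definition aff_indep (d : nat) (x : nat -> nat -> R) (m : nat) : Prop :=
  forall c : nat -> R,
    (forall j, (j < d)%nat ->
       fsum (fun v => c (S v) * (x (S v) j - x O j)) m = 0) ->
    forall v, (1 <= v <= m)%nat -> c v = 0.

Definition aff_span_dim (n d : nat) (q : nat -> nat -> R) (l : nat) : Prop :=
  (exists s : nat -> nat,
      (forall v, (v <= l)%nat -> (s v < n)%nat) /\
      aff_indep d (fun v => q (s v)) l) /\
  (forall s : nat -> nat,
      (forall v, (v <= S l)%nat -> (s v < n)%nat) ->
      ~ aff_indep d (fun v => q (s v)) (S l)).

(* l-pinned position: q_1 = 0 and q_i in span(e_1,...,e_{i-1}) for
   2 <= i <= l+1.  In 0-based indices: for v <= l, the coordinates j with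
   v <= j < d of point v vanish. *)
Definition pinned_position (d l : nat) (q : nat -> nat -> R) : Prop :=
  forall v j, (v <= l)%nat -> (v <= j)%nat -> (j < d)%nat -> q v j = 0.

Definition pinned (n d l : nat) (q : nat -> nat -> R) : Prop :=
  (l < n)%nat /\ aff_span_dim n d q l /\ aff_indep d q l /\
  pinned_position d l q.

Definition isometry_traj (d : nat) (eps : R)
    (A : nat -> nat -> R -> R) (b : nat -> R -> R) : Prop :=
  (forall i j, (i < d)%nat -> (j < d)%nat -> analytic_on eps (A i j)) /\
  (forall i, (i < d)%nat -> analytic_on eps (b i)) /\
  (forall t, Rabs t < eps -> forall i j, (i < d)%nat -> (j < d)%nat ->
      fsum (fun k => A k i t * A k j t) d = kdelta i j) /\
  (forall i j, (i < d)%nat -> (j < d)%nat -> A i j 0 = kdelta i j) /\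
  (forall i, (i < d)%nat -> b i 0 = 0).

Definition apply_iso (d : nat) (A : nat -> nat -> R -> R) (b : nat -> R -> R)
    (x : nat -> R) (j : nat) (t : R) : R :=
  fsum (fun k => A j k t * x k) d + b j t.

Definition analytic_traj (n d : nat) (eps : R) (p : nat -> nat -> R -> R) : Prop :=
  forall v j, (v < n)%nat -> (j < d)%nat -> analytic_on eps (p v j).

Definition k_trivial (n d k : nat) (p : nat -> nat -> R -> R) : Prop :=
  exists eps' A b, 0 < eps' /\ isometry_traj d eps' A b /\
    forall v j m, (v < n)%nat -> (j < d)%nat -> (m <= k)%nat ->
      Derive_n (p v j) m 0 =
      Derive_n (apply_iso d A b (fun i => p v i 0) j) m 0.

Definition k_vanishing (n d k : nat) (p : nat -> nat -> R -> R) : Prop :=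
  forall v j i, (v < n)%nat -> (j < d)%nat -> (1 <= i <= k)%nat ->
    Derive_n (p v j) i 0 = 0.

(* Expand the isometry as [A(t) = sum_m a_m t^m], [b(t) = sum_m beta_m t^m].
   Orthogonality of [A(t)] says that the first coefficient [a_m] (m >= 1) not
   vanishing on the configuration is skew on it.  Pinned position of [p(t)]
   says that [a_m q_v + beta_m] has no component along [e_v, ..., e_d]; for
   [q_1 = 0] this gives [beta_m = 0], so [a_m] maps [q_v] into
   [span (e_1, ..., e_(v-1)) = span (q_2, ..., q_v)].  A map that is skew and
   triangular with respect to the independent vectors [q_2, ..., q_(l+1)]
   vanishes on them, hence on the whole configuration, whose span they are.
   By induction on [m <= k] all these coefficients, and thus the first [k]
   derivatives of [p], vanish. *)

From Stdlib Require Import Reals Lra Lia Classical.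
From Coquelicot Require Import Coquelicot.
Open Scope R_scope.

Lemma fsum_ext f g m : (forall i, (i < m)%nat -> f i = g i) -> fsum f m = fsum g m.
Proof.
  induction m as [|m IH]; intro H; simpl; auto.
  rewrite IH by (intros; apply H; lia). rewrite H by lia. reflexivity.
Qed.

Lemma fsum_eq0 f m : (forall i, (i < m)%nat -> f i = 0) -> fsum f m = 0.
Proof.
  induction m as [|m IH]; intro H; simpl; auto.
  rewrite IH by (intros; apply H; lia). rewrite H by lia. ring.
Qed.

Lemma fsum_plus f g m : fsum (fun i => f i + g i) m = fsum f m + fsum g m.
Proof. induction m as [|m IH]; simpl; [ring | rewrite IH; ring]. Qed.

Lemma fsum_scal_l c f m : fsum (fun i => c * f i) m = c * fsum f m.
Proof. induction m as [|m IH]; simpl; [ring | rewrite IH; ring]. Qed.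

Lemma fsum_scal_r c f m : fsum (fun i => f i * c) m = fsum f m * c.
Proof. induction m as [|m IH]; simpl; [ring | rewrite IH; ring]. Qed.

Lemma fsum_swap (f : nat -> nat -> R) m1 m2 :
  fsum (fun i => fsum (fun j => f i j) m2) m1 =
  fsum (fun j => fsum (fun i => f i j) m1) m2.
Proof.
  induction m1 as [|m1 IH]; simpl.
  - symmetry; apply fsum_eq0; auto.
  - rewrite IH, <- fsum_plus. reflexivity.
Qed.

Lemma fsum_first f m : fsum f (S m) = f O + fsum (fun i => f (S i)) m.
Proof. induction m as [|m IH]; simpl in *; [ring | rewrite IH; ring]. Qed.

Lemma fsum_trunc f m1 m2 : (m1 <= m2)%nat ->
  (forall i, (m1 <= i < m2)%nat -> f i = 0) -> fsum f m2 = fsum f m1.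
Proof.
  induction m2 as [|m2 IH]; intros Hm H.
  - replace m1 with O by lia. reflexivity.
  - destruct (Nat.eq_dec m1 (S m2)) as [->|Hne]; [reflexivity|].
    simpl. rewrite H, IH by (lia || intros; apply H; lia). ring.
Qed.

Lemma fsum_kdelta i g m : (i < m)%nat -> fsum (fun k => kdelta i k * g k) m = g i.
Proof.
  intro Hi. rewrite (fsum_trunc _ (S i) m Hi).
  - simpl. rewrite fsum_eq0.
    + unfold kdelta. rewrite Nat.eqb_refl. ring.
    + intros k Hk. unfold kdelta. destruct (Nat.eqb_spec i k); [lia | ring].
  - intros k Hk. unfold kdelta. destruct (Nat.eqb_spec i k); [lia | ring].
Qed.

Lemma sum_f_R0_fsum g m : sum_f_R0 g m = fsum g (S m).
Proof. induction m as [|m IH]; simpl; [ring | rewrite IH; reflexivity]. Qed.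

Definition mxv (d : nat) (M : nat -> nat -> R) (y : nat -> R) (j : nat) : R :=
  fsum (fun c => M j c * y c) d.

Definition dot (d : nat) (y z : nat -> R) : R := fsum (fun j => y j * z j) d.

Lemma mxv_ext d M y z j : (forall c, (c < d)%nat -> y c = z c) ->
  mxv d M y j = mxv d M z j.
Proof. intro H. apply fsum_ext. intros c Hc. rewrite H; auto. Qed.

Lemma mxv_kdelta d M y j : (forall i c, (i < d)%nat -> (c < d)%nat -> M i c = kdelta i c) ->
  (j < d)%nat -> mxv d M y j = y j.
Proof.
  intros HM Hj. unfold mxv. rewrite (fsum_ext _ (fun c => kdelta j c * y c)).
  - apply fsum_kdelta; auto.
  - intros c Hc. rewrite HM; auto.
Qed.

Lemma mxv_comb d M y x g m j :
  (forall c, (c < d)%nat -> y c = fsum (fun w => g w * x w c) m) ->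
  mxv d M y j = fsum (fun w => g w * mxv d M (x w) j) m.
Proof.
  intro Hy. unfold mxv. rewrite (fsum_ext _ (fun c => fsum (fun w => g w * (M j c * x w c)) m)).
  - rewrite fsum_swap. apply fsum_ext. intros w _. rewrite <- fsum_scal_l. reflexivity.
  - intros c Hc. rewrite Hy, <- fsum_scal_l by auto. apply fsum_ext. intros; ring.
Qed.

Lemma dot_comb_l d y z x g m :
  (forall c, (c < d)%nat -> y c = fsum (fun w => g w * x w c) m) ->
  dot d y z = fsum (fun w => g w * dot d (x w) z) m.
Proof.
  intro Hy. unfold dot. rewrite (fsum_ext _ (fun c => fsum (fun w => g w * (x w c * z c)) m)).
  - rewrite fsum_swap. apply fsum_ext. intros w _. rewrite <- fsum_scal_l. reflexivity.
  - intros c Hc. rewrite Hy, <- fsum_scal_r by auto. apply fsum_ext. intros; ring.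
Qed.

Lemma dot_comm d y z : dot d y z = dot d z y.
Proof. apply fsum_ext. intros; ring. Qed.

Lemma dot_self_eq0 d y : dot d y y = 0 -> forall j, (j < d)%nat -> y j = 0.
Proof.
  unfold dot.
  assert (Hpos : forall m, 0 <= fsum (fun j => y j * y j) m).
  { intro m. induction m as [|m IH]; simpl; [lra | nra]. }
  induction d as [|d IH]; intros H j Hj; [lia|]. simpl in H.
  pose proof (Hpos d). assert (0 <= y d * y d) by nra.
  destruct (Nat.eq_dec j d) as [->|Hne]; [nra | apply IH; [lra | lia]].
Qed.

Lemma dot_mxv_orthogonal d M y z :
  (forall i j, (i < d)%nat -> (j < d)%nat -> fsum (fun c => M c i * M c j) d = kdelta i j) ->
  dot d (mxv d M y) (mxv d M z) = dot d y z.
Proof.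
  intro HM. unfold dot, mxv.
  transitivity (fsum (fun i => y i * fsum (fun j => kdelta i j * z j) d) d).
  - rewrite (fsum_ext _ (fun c => fsum (fun i => fsum (fun j => y i * (M c i * M c j) * z j) d) d)).
    + rewrite fsum_swap. apply fsum_ext. intros i Hi.
      rewrite <- fsum_scal_l. rewrite fsum_swap. apply fsum_ext. intros j Hj.
      rewrite <- HM, <- !fsum_scal_r, <- fsum_scal_l by auto. apply fsum_ext. intros; ring.
    + intros c _. rewrite <- fsum_scal_r. apply fsum_ext. intros i _.
      rewrite <- !fsum_scal_l. apply fsum_ext. intros; ring.
  - apply fsum_ext. intros i Hi. rewrite fsum_kdelta; auto.
Qed.

Definition spans_first_coords (d : nat) (x : nat -> nat -> R) (c : nat) : Prop :=
  forall y : nat -> R, (forall j, (c <= j)%nat -> (j < d)%nat -> y j = 0) ->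
  exists g : nat -> R, forall j, (j < d)%nat -> y j = fsum (fun w => g w * x (S w) j) c.

Section PinnedBasis.

Variables (d l : nat) (x : nat -> nat -> R).
Hypothesis x_indep : aff_indep d x l.
Hypothesis x_pinned : pinned_position d l x.

Lemma pinned_origin j : (j < d)%nat -> x O j = 0.
Proof. intro Hj. apply x_pinned; lia. Qed.

Lemma pinned_diag_neq0 c : (c < l)%nat ->
  spans_first_coords d x c -> x (S c) c <> 0.
Proof.
  intros Hcl Hspan Hdiag.
  destruct (Hspan (x (S c))) as [g Hg].
  { intros j Hj Hjd. destruct (Nat.eq_dec j c) as [->|Hne]; auto. apply x_pinned; lia. }
  set (coef := fun v => if Nat.eqb v (S c) then -1 else if Nat.leb v c then g (pred v) else 0).
  enough (Hzero : coef (S c) = 0) by (unfold coef in Hzero; rewrite Nat.eqb_refl in Hzero; lra).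
  apply x_indep; [|lia]. intros j Hj.
  rewrite (fsum_trunc _ (S c)); [| lia |].
  - simpl. rewrite (fsum_ext _ (fun w => g w * x (S w) j)).
    + rewrite <- Hg, pinned_origin by auto. unfold coef. rewrite Nat.eqb_refl. ring.
    + intros w Hw. rewrite pinned_origin by auto. unfold coef.
      destruct (Nat.eqb_spec (S w) (S c)); [lia|]. destruct (Nat.leb_spec (S w) c); [|lia].
      simpl. ring.
  - intros w Hw. unfold coef.
    destruct (Nat.eqb_spec (S w) (S c)); [lia|]. destruct (Nat.leb_spec (S w) c); [lia|]. ring.
Qed.

Lemma spans_first_coords_S c : (c < l)%nat ->
  spans_first_coords d x c -> spans_first_coords d x (S c).
Proof.
  intros Hcl Hspan y Hy.
  set (r := y c / x (S c) c).
  destruct (Hspan (fun j => y j - r * x (S c) j)) as [g Hg].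
  { intros j Hj Hjd. destruct (Nat.eq_dec j c) as [->|Hne].
    - unfold r. field. apply pinned_diag_neq0; auto.
    - rewrite Hy, (x_pinned (S c) j) by lia. ring. }
  exists (fun w => if Nat.eqb w c then r else g w). intros j Hj. simpl.
  rewrite Nat.eqb_refl, (fsum_ext _ (fun w => g w * x (S w) j)).
  - rewrite <- Hg by auto. ring.
  - intros w Hw. destruct (Nat.eqb_spec w c); [lia | reflexivity].
Qed.

Lemma pinned_spans_first_coords c : (c <= l)%nat -> spans_first_coords d x c.
Proof.
  induction c as [|c IH]; intro Hc.
  - intros y Hy. exists (fun _ => 0). intros j Hj. apply Hy; lia.
  - apply spans_first_coords_S; [lia | apply IH; lia].
Qed.

End PinnedBasis.

Lemma pinned_span_points n d l x : pinned n d l x ->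
  forall v, (v < n)%nat ->
  exists g : nat -> R, forall j, (j < d)%nat -> x v j = fsum (fun w => g w * x (S w) j) l.
Proof.
  intros (Hl & (_ & Hmax) & Hind & Hpin) v Hv.
  set (s := fun w => if Nat.leb w l then w else v).
  assert (Hs : forall w, (w <= S l)%nat -> (s w < n)%nat).
  { intros w Hw. unfold s. destruct (Nat.leb_spec w l); lia. }
  destruct (not_all_ex_not _ _ (Hmax s Hs)) as [cc Hcc].
  apply imply_to_and in Hcc as [Hsum Hnot].
  destruct (not_all_ex_not _ _ Hnot) as [v' Hv'].
  apply imply_to_and in Hv' as [Hv'l Hv'nz].
  assert (Hrel : forall j, (j < d)%nat ->
    fsum (fun w => cc (S w) * x (S w) j) l + cc (S l) * x v j = 0).
  { intros j Hj. rewrite <- (Hsum j Hj). simpl.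
    assert (HsS : s (S l) = v) by (unfold s; destruct (Nat.leb_spec (S l) l); lia).
    change (s O) with O. rewrite HsS, (pinned_origin d l x Hpin j Hj). f_equal; [|ring].
    apply fsum_ext. intros w Hw. unfold s.
    destruct (Nat.leb_spec (S w) l); [ring | lia]. }
  destruct (Req_dec (cc (S l)) 0) as [Hz|Hnz].
  - exfalso. apply Hv'nz.
    destruct (Nat.eq_dec v' (S l)) as [->|Hne]; auto.
    apply Hind; [|lia]. intros j Hj. rewrite <- (Hrel j Hj), Hz, (pinned_origin d l x Hpin j Hj).
    rewrite <- (Rplus_0_r (fsum _ l)) at 1. f_equal; [|ring].
    apply fsum_ext. intros; ring.
  - exists (fun w => - cc (S w) / cc (S l)). intros j Hj.
    rewrite (fsum_ext _ (fun w => - / cc (S l) * (cc (S w) * x (S w) j))).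
    + rewrite fsum_scal_l.
      replace (fsum _ l) with (- (cc (S l) * x v j)) by (pose proof (Hrel j Hj); lra).
      field. auto.
    + intros w _. field. auto.
Qed.

(* Coefficientwise form of [A(t)^T A(t) = I] for the matrix power series
   [A(t) = sum_m a m t^m]: [A_0 = I], and the coefficient of [t^m], [m >= 1],
   in [<A(t) y, A(t) z>] vanishes. *)
Definition orthogonal_pseries (d : nat) (a : nat -> nat -> nat -> R) : Prop :=
  (forall i j, (i < d)%nat -> (j < d)%nat -> a O i j = kdelta i j) /\
  (forall m y z, (1 <= m)%nat ->
     fsum (fun s => dot d (mxv d (a s) y) (mxv d (a (m - s)%nat) z)) (S m) = 0).

Lemma orthogonal_pseries_skew d a m y z : orthogonal_pseries d a -> (1 <= m)%nat ->
  (forall s j, (1 <= s < m)%nat -> (j < d)%nat -> mxv d (a s) y j = 0) ->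
  dot d y (mxv d (a m) z) + dot d (mxv d (a m) y) z = 0.
Proof.
  intros [Ha0 Hcauchy] Hm Hy.
  destruct m as [|m]; [lia|].
  pose proof (Hcauchy (S m) y z Hm) as H.
  rewrite fsum_first in H. cbn [fsum] in H. cbn beta in H. rewrite Nat.sub_0_r, Nat.sub_diag in H.
  rewrite fsum_eq0 in H.
  - assert (Hid : forall w u, dot d (mxv d (a O) w) u = dot d w u).
    { intros w u. apply fsum_ext. intros j Hj. rewrite mxv_kdelta; auto. }
    rewrite Hid, (dot_comm d (mxv d (a (S m)) y)), Hid, (dot_comm d z) in H. lra.
  - intros s Hs. apply fsum_eq0. intros j Hj. rewrite Hy by lia. ring.
Qed.

Section PinnedCoefficients.

Variables (d l : nat) (x : nat -> nat -> R) (a : nat -> nat -> nat -> R).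
Hypothesis x_indep : aff_indep d x l.
Hypothesis x_pinned : pinned_position d l x.
Hypothesis a_orth : orthogonal_pseries d a.

(* [a m] is skew on the points [x v], [v <= l], and maps [x v] into the
   coordinates [< v], which [x 1, ..., x v] span; a skew triangular map
   vanishes, by induction on [v]. *)
Lemma pinned_coef_eq0 m : (1 <= m)%nat ->
  (forall s v j, (1 <= s < m)%nat -> (v <= l)%nat -> (j < d)%nat ->
     mxv d (a s) (x v) j = 0) ->
  (forall v j, (v <= l)%nat -> (v <= j)%nat -> (j < d)%nat -> mxv d (a m) (x v) j = 0) ->
  forall v j, (v <= l)%nat -> (j < d)%nat -> mxv d (a m) (x v) j = 0.
Proof.
  intros Hm Hlower Htri.
  assert (Hskew : forall v w, (v <= l)%nat ->
    dot d (x v) (mxv d (a m) (x w)) + dot d (mxv d (a m) (x v)) (x w) = 0).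
  { intros v w Hv. apply orthogonal_pseries_skew; auto. }
  intro v. induction v as [v IH] using Wf_nat.lt_wf_ind. intros j Hv Hj.
  destruct v as [|v].
  - apply fsum_eq0. intros c Hc. rewrite (pinned_origin d l x x_pinned c Hc). ring.
  - set (y := mxv d (a m) (x (S v))).
    destruct (pinned_spans_first_coords d l x x_indep x_pinned (S v) Hv y) as [g Hg].
    { intros i Hvi Hi. apply Htri; auto. }
    assert (Hperp : forall w, (w < S v)%nat -> dot d (x (S w)) y = 0).
    { intros w Hw. pose proof (Hskew (S w) (S v) ltac:(lia)) as K.
      destruct (Nat.eq_dec w v) as [->|Hne].
      - rewrite (dot_comm d y) in K. fold y in K. lra.
      - assert (Hw0 : dot d (mxv d (a m) (x (S w))) (x (S v)) = 0).
        { apply fsum_eq0. intros i Hi. rewrite (IH (S w)) by lia. ring. }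
        fold y in K. lra. }
    apply (dot_self_eq0 d y); auto.
    rewrite (dot_comb_l d y y (fun w => x (S w)) g (S v) Hg).
    apply fsum_eq0. intros w Hw. rewrite Hperp by auto. ring.
Qed.

End PinnedCoefficients.

Lemma pinned_isometry_coefs_vanish n d l k x a beta :
  pinned n d l x -> orthogonal_pseries d a ->
  (forall v j m, (v <= l)%nat -> (v <= j)%nat -> (j < d)%nat -> (1 <= m <= k)%nat ->
     mxv d (a m) (x v) j + beta m j = 0) ->
  forall v j m, (v < n)%nat -> (j < d)%nat -> (1 <= m <= k)%nat ->
    mxv d (a m) (x v) j + beta m j = 0.
Proof.
  intros Hpin Ha Hfix.
  pose proof Hpin as (_ & _ & Hind & Hpos).
  assert (Hbeta : forall j m, (j < d)%nat -> (1 <= m <= k)%nat -> beta m j = 0).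
  { intros j m Hj Hm. pose proof (Hfix O j m ltac:(lia) ltac:(lia) Hj Hm) as K.
    assert (Horigin : mxv d (a m) (x O) j = 0).
    { apply fsum_eq0. intros c Hc. rewrite (pinned_origin d l x Hpos c Hc). ring. }
    lra. }
  assert (Hcoef : forall m, (1 <= m <= k)%nat ->
    forall v j, (v <= l)%nat -> (j < d)%nat -> mxv d (a m) (x v) j = 0).
  { intro m. induction m as [m IH] using Wf_nat.lt_wf_ind. intro Hm.
    apply (pinned_coef_eq0 d l x a Hind Hpos Ha m); [lia | |].
    - intros s v j Hs. apply IH; lia.
    - intros v j Hv Hvj Hj. pose proof (Hfix v j m Hv Hvj Hj Hm) as K.
      rewrite (Hbeta j m Hj Hm) in K. lra. }
  intros v j m Hv Hj Hm. rewrite (Hbeta j m Hj Hm), Rplus_0_r.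
  destruct (pinned_span_points n d l x Hpin v Hv) as [g Hg].
  rewrite (mxv_comb d (a m) (x v) (fun w => x (S w)) g l j Hg).
  apply fsum_eq0. intros w Hw. rewrite Hcoef by lia. ring.
Qed.

Definition locally_pseries (a : nat -> R) (f : R -> R) : Prop :=
  exists r, 0 < r /\ forall t, Rabs t < r -> is_pseries a t (f t).

Definition taylor_coef (f : R -> R) (m : nat) : R :=
  Derive_n f m 0 / INR (Factorial.fact m).

Lemma ex_pseries_le_CV_radius a x : ex_pseries a x -> Rbar_le (Rabs x) (CV_radius a).
Proof.
  intro H. apply ex_pseries_R, ex_series_lim_0 in H.
  destruct (filterlim_bounded (fun n => a n * x ^ n)) as [M HM]; [exists 0; exact H|].
  apply (proj1 (CV_radius_bounded a)). exists M. intro n.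
  rewrite Rabs_mult, RPow_abs, Rabs_Rabsolu, <- Rabs_mult. apply HM.
Qed.

Lemma locally_pseries_radius a f : locally_pseries a f ->
  exists r, 0 < r /\ Rbar_le r (CV_radius a) /\
    forall t, Rabs t < r -> is_pseries a t (f t).
Proof.
  intros (r & Hr & Hf). exists (r / 2). repeat split; [lra | | intros t Ht; apply Hf; lra].
  replace (r / 2) with (Rabs (r / 2)) by (apply Rabs_pos_eq; lra).
  apply ex_pseries_le_CV_radius. eexists. apply Hf. rewrite Rabs_pos_eq; lra.
Qed.

Lemma locally_pseries_Derive_n a f m : locally_pseries a f ->
  Derive_n f m 0 = a m * INR (Factorial.fact m).
Proof.
  intro Hf. destruct (locally_pseries_radius a f Hf) as (r & Hr & Hrad & Hser).
  rewrite <- Derive_n_coef by (apply (Rbar_lt_le_trans _ r); [exact Hr | exact Hrad]).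
  apply Derive_n_ext_loc. exists (mkposreal r Hr). intros t Ht.
  change (Rabs (t - 0) < r) in Ht. rewrite Rminus_0_r in Ht.
  symmetry. apply is_pseries_unique, Hser, Ht.
Qed.

Lemma Rmult_fact_eq0 x m : x * INR (Factorial.fact m) = 0 -> x = 0.
Proof.
  intro H. apply Rmult_integral in H as [H|H]; auto.
  exfalso. apply (INR_fact_neq_0 m), H.
Qed.

Lemma Derive_n_locally_const f c e m : 0 < e -> (forall t, Rabs t < e -> f t = c) ->
  (1 <= m)%nat -> Derive_n f m 0 = 0.
Proof.
  intros He Hf Hm. destruct m as [|m]; [lia|].
  rewrite (Derive_n_ext_loc f (fun _ => c)); [apply Derive_n_const|].
  exists (mkposreal e He). intros t Ht.
  change (Rabs (t - 0) < e) in Ht. rewrite Rminus_0_r in Ht. auto.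
Qed.

Lemma locally_pseries_taylor a f : locally_pseries a f -> locally_pseries (taylor_coef f) f.
Proof.
  intros Hf.
  assert (Ha : forall m, a m = taylor_coef f m).
  { intro m. unfold taylor_coef. rewrite (locally_pseries_Derive_n a f m Hf).
    field. apply INR_fact_neq_0. }
  destruct Hf as (r & Hr & Hser). exists r. split; auto. intros t Ht.
  apply (is_pseries_ext a); auto.
Qed.

Lemma analytic_on_pseries eps f : 0 < eps -> analytic_on eps f ->
  locally_pseries (taylor_coef f) f.
Proof.
  intros He Hf. destruct (Hf 0) as (r & Hr & a & Hser); [rewrite Rabs_R0; auto|].
  apply (locally_pseries_taylor a). exists r. split; auto. intros t Ht.
  pose proof (Hser t) as K. rewrite Rminus_0_r in K. auto.
Qed.

Lemma locally_pseries_zero : locally_pseries (fun _ => 0) (fun _ => 0).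
Proof.
  exists 1. split; [lra|]. intros t _.
  apply (filterlim_ext (fun _ => 0)); [|apply filterlim_const].
  intro n. induction n as [|n IH].
  - rewrite sum_O. unfold scal; simpl. unfold mult; simpl. ring.
  - rewrite sum_Sn, <- IH. unfold scal, plus; simpl. unfold mult; simpl. ring.
Qed.

Lemma locally_pseries_plus a b f g : locally_pseries a f -> locally_pseries b g ->
  locally_pseries (fun n => a n + b n) (fun t => f t + g t).
Proof.
  intros (r1 & Hr1 & Hf) (r2 & Hr2 & Hg). exists (Rmin r1 r2).
  split; [apply Rmin_pos; auto|]. intros t Ht.
  pose proof (Rmin_l r1 r2). pose proof (Rmin_r r1 r2).
  apply (is_pseries_plus a b t (f t) (g t)); [apply Hf | apply Hg]; lra.
Qed.

Lemma locally_pseries_scal_r a f c : locally_pseries a f ->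
  locally_pseries (fun n => a n * c) (fun t => f t * c).
Proof.
  intros (r & Hr & Hf). exists r. split; auto. intros t Ht.
  rewrite Rmult_comm. apply (is_pseries_ext (PS_scal c a)).
  - intro n. apply Rmult_comm.
  - apply (is_pseries_scal c a t (f t)); [apply Rmult_comm | auto].
Qed.

Lemma locally_pseries_mult a b f g : locally_pseries a f -> locally_pseries b g ->
  locally_pseries (PS_mult a b) (fun t => f t * g t).
Proof.
  intros Hf Hg.
  destruct (locally_pseries_radius a f Hf) as (r1 & Hr1 & Hrad1 & Hf').
  destruct (locally_pseries_radius b g Hg) as (r2 & Hr2 & Hrad2 & Hg').
  exists (Rmin r1 r2). split; [apply Rmin_pos; auto|]. intros t Ht.
  pose proof (Rmin_l r1 r2). pose proof (Rmin_r r1 r2).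
  apply is_pseries_mult; [apply Hf' | apply Hg' | |]; try lra.
  - eapply Rbar_lt_le_trans; [|exact Hrad1]. simpl. lra.
  - eapply Rbar_lt_le_trans; [|exact Hrad2]. simpl. lra.
Qed.

Lemma locally_pseries_fsum (a : nat -> nat -> R) (F : nat -> R -> R) m :
  (forall k, (k < m)%nat -> locally_pseries (a k) (F k)) ->
  locally_pseries (fun n => fsum (fun k => a k n) m) (fun t => fsum (fun k => F k t) m).
Proof.
  induction m as [|m IH]; intro H; simpl.
  - apply locally_pseries_zero.
  - apply locally_pseries_plus; [apply IH; intros; apply H|apply H]; lia.
Qed.

Lemma locally_pseries_mxv d (a : nat -> nat -> nat -> R) (A : nat -> nat -> R -> R) y j :
  (forall i c, (i < d)%nat -> (c < d)%nat -> locally_pseries (fun m => a m i c) (A i c)) ->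
  (j < d)%nat ->
  locally_pseries (fun m => mxv d (a m) y j) (fun t => mxv d (fun i c => A i c t) y j).
Proof.
  intros HA Hj. apply (locally_pseries_fsum (fun c m => a m j c * y c) (fun c t => A j c t * y c)).
  intros c Hc. apply locally_pseries_scal_r, HA; auto.
Qed.

Lemma isometry_traj_orthogonal_pseries d eps A b : 0 < eps -> isometry_traj d eps A b ->
  orthogonal_pseries d (fun m i j => taylor_coef (A i j) m).
Proof.
  intros He (HA & _ & Horth & HA0 & _).
  set (a := fun m i j => taylor_coef (A i j) m).
  assert (Ga : forall i j, (i < d)%nat -> (j < d)%nat ->
    locally_pseries (fun m => a m i j) (A i j)).
  { intros i j Hi Hj. apply (analytic_on_pseries eps); auto. }
  split.
  - intros i j Hi Hj. unfold a, taylor_coef. simpl. rewrite HA0 by auto. field.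
  - intros m y z Hm.
    assert (Gdot : locally_pseries
      (fun m => fsum (fun j => PS_mult (fun s => mxv d (a s) y j) (fun s => mxv d (a s) z j) m) d)
      (fun t => dot d (mxv d (fun i c => A i c t) y) (mxv d (fun i c => A i c t) z))).
    { apply locally_pseries_fsum. intros j Hj.
      apply locally_pseries_mult; apply locally_pseries_mxv; auto. }
    pose proof (locally_pseries_Derive_n _ _ m Gdot) as K.
    rewrite (Derive_n_locally_const _ (dot d y z) eps m He) in K; auto.
    2:{ intros t Ht. apply dot_mxv_orthogonal. intros i j Hi Hj. apply Horth; auto. }
    symmetry in K. apply Rmult_fact_eq0 in K. rewrite <- K. unfold dot.
    rewrite fsum_swap. apply fsum_ext. intros j _.
    unfold PS_mult. rewrite sum_f_R0_fsum. reflexivity.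
Qed.

Lemma Derive_n_apply_iso d eps A b y j m : 0 < eps -> isometry_traj d eps A b ->
  (j < d)%nat ->
  Derive_n (apply_iso d A b y j) m 0 =
  (mxv d (fun i c => taylor_coef (A i c) m) y j + taylor_coef (b j) m) *
  INR (Factorial.fact m).
Proof.
  intros He (HA & Hb & _) Hj.
  apply (locally_pseries_Derive_n
    (fun m => mxv d (fun i c => taylor_coef (A i c) m) y j + taylor_coef (b j) m)).
  apply locally_pseries_plus.
  - apply (locally_pseries_mxv d (fun m i c => taylor_coef (A i c) m)); auto.
    intros i c Hi Hc. apply (analytic_on_pseries eps); auto.
  - apply (analytic_on_pseries eps); auto.
Qed.

Lemma k_trivial_taylor n d k p q :
  (forall v j, (v < n)%nat -> (j < d)%nat -> p v j 0 = q v j) ->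
  k_trivial n d k p ->
  exists a beta, orthogonal_pseries d a /\
    forall v j m, (v < n)%nat -> (j < d)%nat -> (m <= k)%nat ->
      Derive_n (p v j) m 0 = (mxv d (a m) (q v) j + beta m j) * INR (Factorial.fact m).
Proof.
  intros Hp0 (eps & A & b & He & Hiso & Htriv).
  exists (fun m i c => taylor_coef (A i c) m), (fun m j => taylor_coef (b j) m).
  split; [apply (isometry_traj_orthogonal_pseries d eps A b); auto|].
  intros v j m Hv Hj Hm.
  rewrite Htriv, (Derive_n_apply_iso d eps A b) by auto.
  f_equal. f_equal. apply mxv_ext. intros c Hc. apply Hp0; auto.
Qed.

Theorem lemmaA9 (n d l k : nat) (q : nat -> nat -> R)
    (eps : R) (p : nat -> nat -> R -> R) :
  pinned n d l q ->
  (1 <= k)%nat ->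
  0 < eps ->
  analytic_traj n d eps p ->
  (forall v j, (v < n)%nat -> (j < d)%nat -> p v j 0 = q v j) ->
  (forall t, Rabs t < eps -> pinned_position d l (fun v j => p v j t)) ->
  k_trivial n d k p ->
  k_vanishing n d k p.
Proof.
  intros Hpin _ He _ Hp0 Hpos Htriv.
  destruct (k_trivial_taylor n d k p q Hp0 Htriv) as (a & beta & Ha & Htaylor).
  assert (Hl : (l < n)%nat) by apply Hpin.
  assert (Hfix : forall v j m, (v <= l)%nat -> (v <= j)%nat -> (j < d)%nat ->
    (1 <= m <= k)%nat -> mxv d (a m) (q v) j + beta m j = 0).
  { intros v j m Hv Hvj Hj Hm. apply (Rmult_fact_eq0 _ m).
    rewrite <- Htaylor by lia.
    apply (Derive_n_locally_const _ 0 eps); [auto | | lia].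
    intros t Ht. apply (Hpos t Ht); auto. }
  intros v j m Hv Hj Hm.
  rewrite Htaylor, (pinned_isometry_coefs_vanish n d l k q a beta Hpin Ha Hfix) by lia.
  ring.
Qed.
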